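(* Let $X$ be a smooth real Banach space of finite dimension $n$, let $S_X$ be its unit sphere, and let $S^n_{X,>0}$ be the set of $n$-tuples $(v_1,\dots,v_n)\in S_X^n$ (viewed as $n\times n$ real matrices with rows $v_i$) that are linearly independent, regarded as a differentiable manifold. Then $\{v_1,\dots,v_n\}$ is an Auerbach basis of $X$ if and only if $(v_1,\dots,v_n)$ is a critical point of the determinant function $\det: S^n_{X,>0}\to\mathbb{R}$, i.e. $\sum_{k=1}^n \det(v_1,\dots,v_{k-1},u_k,v_{k+1},\dots,v_n)=0$ for all $u_k$ in the tangent space $T_{v_k}S_X$, $k=1,\dots,n$.
   Context: A Banach space is smooth if at every point of the unit sphere there is exactly one supporting hyperplane of the unit ball (equivalently, the norm is Gateaux differentiable at every nonzero point). In a real normed space $X$, $x\perp_B y$ (Birkhoff–James orthogonality) means $\|x\|\le\|x+\lambda y\|$ for all $\lambda\in\mathbb{R}$. A basis $\mathcal{B}$ of $X$ is an Auerbach basis if every $v\in\mathcal{B}$ satisfies $\|v\|=1$ and $v\perp_B w$ for all $w\in\mathrm{span}(\mathcal{B}\setminus\{v\})$. *)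

From HB Require Import structures.
From mathcomp Require Import all_boot all_order all_algebra.
From mathcomp Require Import all_classical all_reals all_analysis.
Set Implicit Arguments. Unset Strict Implicit. Unset Printing Implicit Defensive.
Import Order.TTheory GRing.Theory Num.Theory.
Import numFieldNormedType.Exports.
Local Open Scope ring_scope.

(* A finite-dimensional real normed space of dimension n is modelled as the
   coordinate space 'rV[R]_n equipped with an arbitrary norm N. *)
Definition is_norm (R : realType) (n : nat) (N : 'rV[R]_n -> R) : Prop :=
  [/\ forall x, N x = 0 -> x = 0,
      forall (a : R) x, N (a *: x) = `|a| * N x
    & forall x y, N (x + y) <= N x + N y].

Definition smooth_norm (R : realType) (n : nat) (N : 'rV[R]_n -> R) : Prop :=
  forall x : 'rV[R]_n, x != 0 ->
    (forall u : 'rV[R]_n, derivable N x u) /\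
    (forall (a : R) (u w : 'rV[R]_n),
        'D_(a *: u + w) N x = a * 'D_u N x + 'D_w N x).

Definition BJ_orth (R : realType) (n : nat) (N : 'rV[R]_n -> R)
  (x y : 'rV[R]_n) : Prop :=
  forall l : R, N x <= N (x + l *: y).

(* The rows of V form an Auerbach basis (V is assumed to have linearly
   independent rows): every row has norm 1 and is Birkhoff-James orthogonal
   to every vector in the span of the other rows. *)
Definition auerbach_basis (R : realType) (n : nat) (N : 'rV[R]_n -> R)
  (V : 'M[R]_n) : Prop :=
  forall i : 'I_n, N (row i V) = 1 /\
    forall c : 'I_n -> R,
      BJ_orth N (row i V) (\sum_(j < n | j != i) c j *: row j V).

Definition tangent_vec (R : realType) (n : nat) (N : 'rV[R]_n -> R)
  (v u : 'rV[R]_n) : Prop :=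
  exists c : R -> 'rV[R]_n,
    [/\ forall t, N (c t) = 1, c 0 = v, derivable c 0 1 & 'D_1 c 0 = u].

Definition replace_row (R : realType) (n : nat) (V : 'M[R]_n) (k : 'I_n)
  (u : 'rV[R]_n) : 'M[R]_n :=
  \matrix_(i, j) (if i == k then u 0 j else V i j).

From HB Require Import structures.
From mathcomp Require Import all_boot all_order all_algebra.
From mathcomp Require Import all_classical all_reals all_analysis.
From mathcomp Require Import ring lra.
Import Order.TTheory GRing.Theory Num.Theory.
Import numFieldNormedType.Exports.
Set Implicit Arguments.
Unset Strict Implicit.
Local Open Scope classical_set_scope.
Local Open Scope ring_scope.

(* In a smooth space, x is Birkhoff-James orthogonal to y iff the Gateaux
   derivative D_y N(x) of the norm vanishes (Fermat's rule in one direction,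
   the subgradient inequality of the convex function N in the other), and the
   tangent space of the unit sphere at v is the kernel of u |-> D_u N(v).
   Expanding along row k, det(v_1, .., u_k, .., v_n) is det V times the k-th
   coordinate of u_k in the basis V.  For an Auerbach basis D N(v_k) is exactly
   the k-th coordinate functional, so every term of the sum vanishes on tangent
   vectors.  Conversely, if s = D_y N(v_k) <> 0 for some y in the span of the
   other rows, then y - s v_k is tangent at v_k with k-th coordinate -s, so
   perturbing row k alone makes the sum nonzero. *)

Section Calculus.
Context {R : realType} {V : normedModType R}.

Lemma derive_eq0_at_min (f : V -> R) x y : derivable f x y ->
  (forall t : R, f x <= f (x + t *: y)) -> 'D_y f x = 0.
Proof.
move=> df fmin; set q := fun h : R => h^-1 * (f (h *: y + x) - f x).
have dq : q @ 0^' --> 'D_y f x := df.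
have q_ge0 h : 0 < h -> 0 <= q h.
  move=> h0; apply: mulr_ge0; first by rewrite invr_ge0 ltW.
  by rewrite subr_ge0 addrC.
have q_le0 h : h < 0 -> q h <= 0.
  move=> h0; apply: mulr_le0_ge0; first by rewrite invr_le0 ltW.
  by rewrite subr_ge0 addrC.
apply/eqP; rewrite eq_le; apply/andP; split.
- apply: (cvgr_to_le (cvg_dnbhs_at_left dq)).
  by near=> h; apply: q_le0; near: h; exact: nbhs_left_lt.
- apply: (cvgr_to_ge (cvg_dnbhs_at_right dq)).
  by near=> h; apply: q_ge0; near: h; exact: nbhs_right_gt.
Unshelve. all: by end_near. Qed.

Lemma derivable1_at0P (c : R -> V) l :
  derivable c 0 1 /\ 'D_1 c 0 = l <-> h^-1 *: (c h - c 0) @[h --> 0^'] --> l.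
Proof.
have -> : (fun h : R => h^-1 *: (c h - c 0)) =
          (fun h => h^-1 *: ((c \o shift 0) (h *: 1) - c 0)).
  by apply/funext => h /=; rewrite addr0 [h *: 1]mulr1.
split=> [[dc <-] // | dc]; split; [exact: cvgP dc | exact: cvg_lim dc].
Qed.

End Calculus.

Section Norm.
Context {R : realType} {n : nat} {N : 'rV[R]_n -> R} (hN : is_norm N).

Lemma nrmZ a x : N (a *: x) = `|a| * N x.
Proof. by case: hN => _ homo _; apply: homo. Qed.

Lemma ler_nrmD x y : N (x + y) <= N x + N y.
Proof. by case: hN => _ _ triangle; apply: triangle. Qed.

Lemma nrm0 : N 0 = 0.
Proof. by rewrite -(scale0r 0) nrmZ normr0 mul0r. Qed.

Lemma nrmN x : N (- x) = N x.
Proof. by rewrite -scaleN1r nrmZ normrN normr1 mul1r. Qed.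

Lemma nrm1_neq0 x : N x = 1 -> x != 0.
Proof.
move=> Nx; apply/eqP => x0; move: Nx.
by rewrite x0 nrm0 => /eqP; rewrite eq_sym oner_eq0.
Qed.

Lemma nrm_ge0 x : 0 <= N x.
Proof.
have := ler_nrmD x (- x); rewrite subrr nrm0 nrmN.
by rewrite -mulr2n pmulrn_lge0.
Qed.

Lemma ler_nrm_dist x y : `|N x - N y| <= N (x - y).
Proof.
have := ler_nrmD (x - y) y; rewrite subrK => le_x.
have := ler_nrmD (y - x) x; rewrite subrK -(nrmN (y - x)) opprB => le_y.
by rewrite ler_norml; apply/andP; split; lra.
Qed.

Lemma ler_nrm_sum (I : Type) (r : seq I) (P : pred I) (F : I -> 'rV[R]_n) :
  N (\sum_(i <- r | P i) F i) <= \sum_(i <- r | P i) N (F i).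
Proof.
elim/big_ind2: _ => [|x1 y1 x2 y2 le1 le2|//]; first by rewrite nrm0.
exact: le_trans (ler_nrmD _ _) (lerD le1 le2).
Qed.

Lemma nrm_le_mx_norm : exists2 K : R, 0 < K & forall x, N x <= K * `|x|.
Proof.
exists (1 + \sum_(j < n) N (delta_mx 0 j)) => [|x].
  by rewrite ltr_pwDl // sumr_ge0 // => j _; exact: nrm_ge0.
rewrite {1}(matrix_sum_delta x) big_ord1.
apply: le_trans; first exact: ler_nrm_sum.
rewrite mulrDl mul1r mulr_suml ler_wpDl // ler_sum // => j _.
rewrite nrmZ mulrC ler_wpM2l ?nrm_ge0 //.
rewrite [leRHS]/Num.Def.normr /= mx_normrE.
by apply: le_trans (le_bigmax _ _ (0, j)).
Qed.

Lemma nrm_continuous : continuous N.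
Proof.
have [K K0 NK] := nrm_le_mx_norm.
move=> x; apply/(@cvgrPdist_lt _ _ _ _ (nbhs_filter x)) => e e0; near=> y.
apply: le_lt_trans (ler_nrm_dist _ _) _.
apply: le_lt_trans (NK _) _.
rewrite mulrC -ltr_pdivlMr //.
near: y; apply: (@cvgr_dist_lt _ _ _ (nbhs x) _ id) => //; exact: divr_gt0.
Unshelve. all: by end_near. Qed.

Lemma nrm_convex t x y : 0 <= t -> t <= 1 ->
  N (t *: x + (1 - t) *: y) <= t * N x + (1 - t) * N y.
Proof.
move=> t0 t1; apply: le_trans (ler_nrmD _ _) _.
by rewrite !nrmZ !ger0_norm ?subr_ge0.
Qed.

Lemma derive_nrm_self x : 'D_x N x = N x.
Proof.
apply: cvg_lim => //.
suff : (fun h : R => h^-1 * (N (h *: x + x) - N x)) @ 0^' --> N x by [].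
apply: cvg_near_cst; near=> h.
have h0 : h != 0 by near: h; exact: nbhs_dnbhs_neq.
have h1 : `|h| < 1 by near: h; exact: dnbhs0_lt.
rewrite -{2}(scale1r x) -scalerDl nrmZ ger0_norm; last first.
  by move: h1; rewrite ltr_norml => /andP[]; lra.
by rewrite mulrDl mul1r addrK mulrA mulVf // mul1r.
Unshelve. all: by end_near. Qed.

Lemma derive_nrm_le x w : derivable N x w -> 'D_w N x <= N (x + w) - N x.
Proof.
move=> dw.
have dq : (fun h : R => h^-1 * (N (h *: w + x) - N x)) @ 0^' --> 'D_w N x := dw.
apply: (cvgr_to_le (cvg_dnbhs_at_right dq)); near=> t.
have t0 : 0 < t by near: t; exact: nbhs_right_gt.
have t1 : t < 1 by near: t; exact: nbhs_right_lt.
have -> : t *: w + x = t *: (x + w) + (1 - t) *: x.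
  by apply/rowP => j; rewrite !mxE; ring.
have conv := nrm_convex (x + w) x (ltW t0) (ltW t1).
rewrite mulrC ler_pdivrMr //; lra.
Unshelve. all: by end_near. Qed.

Lemma derive_nrm_tangent v u : tangent_vec N v u -> 'D_u N v = 0.
Proof.
case=> c [Nc c0 dc Dc].
have := (derivable1_at0P c u).1 (conj dc Dc); rewrite c0 => dcu.
set r := fun h : R => u - h^-1 *: (c h - v).
have Nr0 : (N \o r) @ 0^' --> 0.
  rewrite -[X in _ --> X]nrm0.
  apply: continuous_cvg; first exact: nrm_continuous.
  by have := cvgB (cvg_cst u) dcu; rewrite subrr; apply; exact: dnbhs_filter.
apply: cvg_lim => //.
suff : (fun h : R => h^-1 * (N (h *: u + v) - N v)) @ 0^' --> 0 by [].
have NrN0 : (- (N \o r)) @ 0^' --> 0.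
  by rewrite -[X in _ --> X]oppr0; exact: cvgN.
apply: (squeeze_cvgr _ NrN0 Nr0).
(* [N (c h) = N v], so the difference quotient is controlled by [N (r h)]. *)
near=> h; rewrite -ler_norml.
have h0 : h != 0 by near: h; exact: nbhs_dnbhs_neq.
have -> : N v = N (c h) by rewrite -c0 !Nc.
have -> : h *: u + v = h *: r h + c h.
  by rewrite /r scalerBr scalerA mulfV // scale1r opprB addrA subrK.
rewrite normrM normfV ler_pdivrMl ?normr_gt0 // -nrmZ.
by apply: le_trans (ler_nrm_dist _ _) _; rewrite addrK.
Unshelve. all: by end_near. Qed.

End Norm.

Section SmoothNorm.
Context {R : realType} {n : nat} {N : 'rV[R]_n -> R}.
Hypotheses (hN : is_norm N) (hs : smooth_norm N).

Lemma derivable_nrm x u : x != 0 -> derivable N x u.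
Proof. by move=> x0; case: (hs x0). Qed.

Lemma derive_nrm_linear x a u w : x != 0 ->
  'D_(a *: u + w) N x = a * 'D_u N x + 'D_w N x.
Proof. by move=> x0; case: (hs x0). Qed.

Lemma derive_nrmZ x a u : x != 0 -> 'D_(a *: u) N x = a * 'D_u N x.
Proof.
by move=> x0; have := derive_nrm_linear a u 0 x0; rewrite !addr0 derive0 addr0.
Qed.

Lemma BJ_orth_derive0 x y : x != 0 -> BJ_orth N x y <-> 'D_y N x = 0.
Proof.
move=> x0; split=> [xy | Dy l].
  exact: derive_eq0_at_min (derivable_nrm x0) xy.
have := derive_nrm_le hN (derivable_nrm x0 (u := l *: y)).
by rewrite derive_nrmZ // Dy mulr0 subr_ge0.
Qed.

Lemma tangent_vecP v u : N v = 1 -> tangent_vec N v u <-> 'D_u N v = 0.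
Proof.
move=> Nv; split; first exact: derive_nrm_tangent.
move=> Du; have v0 := nrm1_neq0 hN Nv.
(* The curve is the radial projection [c] of the line [t *: u + v] onto the
   sphere; [v] being orthogonal to [u], the line avoids the open unit ball. *)
set g := fun t : R => N (t *: u + v).
have vu : BJ_orth N v u by apply/BJ_orth_derive0.
have g_ge1 t : 1 <= g t by rewrite /g addrC -Nv; apply: vu.
have g_neq0 t : g t != 0 by apply: lt0r_neq0; apply: lt_le_trans (g_ge1 t).
have g1 : g @ 0^' --> (1 : R).
  have <- : g 0 = 1 by rewrite /g scale0r add0r.
  apply/continuous_withinNx; apply: continuous_comp; last exact: nrm_continuous.
  by apply: cvgD; [exact: scalel_continuous | exact: cvg_cst].
set q := fun h : R => h^-1 * (g h - 1).
have q0 : q @ 0^' --> (0 : R).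
  have : (fun h : R => h^-1 * (N (h *: u + v) - N v)) @ 0^' --> 'D_u N v :=
    derivable_nrm v0.
  by rewrite Du Nv.
set c := fun t : R => (g t)^-1 *: (t *: u + v).
have c0 : c 0 = v by rewrite /c /g scale0r add0r Nv invr1 scale1r.
have [dc Dc] : derivable c 0 1 /\ 'D_1 c 0 = u.
  apply/derivable1_at0P; rewrite c0.
  have E : {near 0^', (fun h => (g h)^-1 *: (u - q h *: v)) =1
                     (fun h : R => h^-1 *: (c h - v))}.
    near=> h => /=.
    have h0 : h != 0 by near: h; exact: nbhs_dnbhs_neq.
    apply/rowP => j; rewrite /c /q !mxE.
    by field; rewrite h0 g_neq0.
  apply: cvg_trans (near_eq_cvg E) _.
  have := cvgZ (cvgV (oner_neq0 R) g1) (cvgB (cvg_cst u) (cvgZ q0 (cvg_cst v))).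
  by rewrite invr1 scale0r subr0 scale1r; apply.
exists c; split => // t.
rewrite /c (nrmZ hN) ger0_norm ?mulVf //.
by rewrite invr_ge0 (le_trans ler01 (g_ge1 t)).
Unshelve. all: by end_near. Qed.

End SmoothNorm.

Section ReplaceRow.
Context {R : realType} {n : nat}.
Implicit Types (V : 'M[R]_n) (u : 'rV[R]_n).

Lemma det_replace_row V k u : \det (replace_row V k u) = (u *m \adj V) 0 k.
Proof.
rewrite (expand_det_row _ k) mxE; apply: eq_bigr => j _.
rewrite !mxE eqxx; congr (_ * (_ * \det _)).
by apply/matrixP => a b; rewrite !mxE eq_sym (negbTE (neq_lift _ _)).
Qed.

Lemma det_replace_row_comb V k (c : 'I_n -> R) :
  \det (replace_row V k (\sum_j c j *: row j V)) = c k * \det V.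
Proof.
have -> : \sum_j c j *: row j V = \row_j c j *m V.
  by rewrite mulmx_sum_row; apply: eq_bigr => j _; rewrite mxE.
by rewrite det_replace_row -mulmxA mul_mx_adj mul_mx_scalar !mxE mulrC.
Qed.

End ReplaceRow.

Definition det_critical (R : realType) (n : nat) (N : 'rV[R]_n -> R)
  (V : 'M[R]_n) : Prop :=
  forall u : 'I_n -> 'rV[R]_n, (forall k, tangent_vec N (row k V) (u k)) ->
    \sum_(k < n) \det (replace_row V k (u k)) = 0.

Section AuerbachCritical.
Context {R : realType} {n : nat} {N : 'rV[R]_n -> R}.
Hypotheses (hN : is_norm N) (hs : smooth_norm N).
Variable V : 'M[R]_n.
Hypothesis hV : forall i, N (row i V) = 1.

Let row_neq0 i : row i V != 0 := nrm1_neq0 hN (hV i).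

Lemma auerbach_derive_row_comb k (c : 'I_n -> R) : auerbach_basis N V ->
  'D_(\sum_j c j *: row j V) N (row k V) = c k.
Proof.
move=> HA; rewrite (bigD1 k) //= (derive_nrm_linear hs) // (derive_nrm_self hN).
rewrite hV mulr1.
by have /(BJ_orth_derive0 hN hs _ (row_neq0 k)) -> := (HA k).2 c; rewrite addr0.
Qed.

Lemma auerbach_det_critical :
  V \in unitmx -> auerbach_basis N V -> det_critical N V.
Proof.
move=> Vu HA u tu; apply: big1 => k _.
set c := fun j => (u k *m invmx V) 0 j.
have Eu : u k = \sum_j c j *: row j V by rewrite -mulmx_sum_row mulmxKV.
have := derive_nrm_tangent hN (tu k).
rewrite Eu auerbach_derive_row_comb // det_replace_row_comb => ->.
exact: mul0r.
Qed.

Lemma det_critical_auerbach :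
  \det V != 0 -> det_critical N V -> auerbach_basis N V.
Proof.
move=> dV HS i; split => // c.
set y := \sum_(j < n | j != i) c j *: row j V.
apply/(BJ_orth_derive0 hN hs _ (row_neq0 i)).
set s := 'D_y N (row i V).
set w := \sum_j (if j == i then - s else c j) *: row j V.
have tw : tangent_vec N (row i V) w.
  apply/(tangent_vecP hN hs _ (hV i)).
  rewrite /w (bigD1 i) //= eqxx (derive_nrm_linear hs) // (derive_nrm_self hN).
  rewrite hV mulr1.
  rewrite (eq_bigr (fun j => c j *: row j V)) => [|j /negbTE -> //].
  by rewrite addNr.
have tu k : tangent_vec N (row k V) (if k == i then w else 0).
  case: eqP => [-> // | _]; apply/(tangent_vecP hN hs _ (hV k)); exact: derive0.
move: (HS _ tu); rewrite (bigD1 i) //= eqxx big1 => [|k /negbTE ->]; last first.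
  by rewrite det_replace_row mul0mx mxE.
rewrite addr0 det_replace_row_comb eqxx => /eqP.
by rewrite mulf_eq0 (negbTE dV) orbF oppr_eq0 => /eqP.
Qed.

End AuerbachCritical.

Theorem mainTheorem2 (R : realType) (n : nat) (N : 'rV[R]_n -> R)
  (hN : is_norm N) (hsmooth : smooth_norm N)
  (V : 'M[R]_n) (hV : forall i : 'I_n, N (row i V) = 1) (hfree : row_free V) :
  auerbach_basis N V <->
  (forall u : 'I_n -> 'rV[R]_n,
     (forall k : 'I_n, tangent_vec N (row k V) (u k)) ->
     \sum_(k < n) \det (replace_row V k (u k)) = 0).
Proof.
have Vu : V \in unitmx by rewrite -row_free_unit.
split; first exact: (auerbach_det_critical hN hsmooth hV).
by apply: (det_critical_auerbach hN hsmooth hV); rewrite -unitfE -unitmxE.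
Qed.
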